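(* Let $f,g,h$ be nonnegative continuous functions on $[0,1]$, differentiable on $(0,1)$, positive on $(0,1]$, with $F=\log f$, $G=\log g$, $H=\log h$ such that $F'(x)\neq 0$ on $(0,1)$ and $F(x)\neq F(y)$ for $x\neq y$. Assume one of the following: (I) $(f,g)$ and $(f,h)$ are both CLI monotone pairs and $$1+\frac{G(y)-G(x)}{F(y)-F(x)}\le \frac{H(y)-H(x)}{F(y)-F(x)}\quad\text{for all } x<y;$$ (II) $(f,g)$ is a CLI monotone pair, $(f,h)$ is a CLI anti-monotone pair, and $$1+\frac{G(y)-G(x)}{F(y)-F(x)}+\frac{H(y)-H(x)}{F(y)-F(x)}\ge 0\quad\text{for all } x<y.$$ Then for every $\rho\in M_{n,+,1}(\mathbb{C})$ and all $A,B\in M_{n,sa}(\mathbb{C})$, $$U_{\rho,(f,g,h)}(A)\,U_{\rho,(f,g,h)}(B)\ \ge\ \beta(f,g,h)\,\big|\mathrm{Tr}[f(\rho)g(\rho)h(\rho)[A,B]]\big|^2 .$$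
   Context: $M_{n,sa}(\mathbb{C})$ denotes the $n\times n$ self-adjoint complex matrices and $M_{n,+,1}(\mathbb{C})=\{\rho\in M_n(\mathbb{C}):\rho>0,\ \mathrm{Tr}\rho=1\}$ the strictly positive density matrices; $f(\rho)$ etc. denote functional calculus. $[X,Y]=XY-YX$, $\{X,Y\}=XY+YX$. For $H\in M_{n,sa}(\mathbb{C})$ put $H_0=H-\mathrm{Tr}[\rho H]I$, and define $I_{\rho,(f,g,h)}(H)=\tfrac12\mathrm{Tr}[(i[f(\rho),H_0])(i[g(\rho),H_0])h(\rho)]$, $J_{\rho,(f,g,h)}(H)=\tfrac12\mathrm{Tr}[\{f(\rho),H_0\}\{g(\rho),H_0\}h(\rho)]$, $U_{\rho,(f,g,h)}(H)=\sqrt{I_{\rho,(f,g,h)}(H)J_{\rho,(f,g,h)}(H)}$. A pair $(f,g)$ of nonnegative continuous functions on $[0,1]$, differentiable on $(0,1)$, with $F=\log f$, $G=\log g$, is a CLI monotone pair if (a) $(f(x)-f(y))(g(x)-g(y))\ge 0$ for all $x,y\in[0,1]$ and (b) $0\le \inf_{0<x<1}G'(x)/F'(x)\le\sup_{0<x<1}G'(x)/F'(x)<\infty$; it is a CLI anti-monotone pair if (a) $(f(x)-f(y))(g(x)-g(y))\le 0$ for all $x,y$ and (b) $-\infty<\inf_{0<x<1}G'(x)/F'(x)\le\sup_{0<x<1}G'(x)/F'(x)\le 0$. With $m=\inf_{0<x<1}G'/F'$, $M=\sup_{0<x<1}G'/F'$, $n=\inf_{0<x<1}H'/F'$, $N=\sup_{0<x<1}H'/F'$,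 define $$\beta(f,g,h)=\min\Big\{\frac{m}{(1+m+n)^2},\frac{m}{(1+m+N)^2},\frac{M}{(1+M+n)^2},\frac{M}{(1+M+N)^2}\Big\}.$$ *)

(* classical reals (Stdlib Reals), complex numbers built as
   pairs of reals, n x n complex matrices as functions nat -> nat -> C
   (only indices < n are ever used). *)
From Stdlib Require Import Reals.
Open Scope R_scope.

Record C := mkC { Re : R ; Im : R }.
Definition RtoC (r : R) : C := mkC r 0.
Definition C0 : C := RtoC 0.
Definition C1 : C := RtoC 1.
Definition Ci : C := mkC 0 1.
Definition Cadd (a b : C) : C := mkC (Re a + Re b) (Im a + Im b).
Definition Copp (a : C) : C := mkC (- Re a) (- Im a).
Definition Cmul (a b : C) : C :=
  mkC (Re a * Re b - Im a * Im b) (Re a * Im b + Im a * Re b).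
Definition Cconj (a : C) : C := mkC (Re a) (- Im a).
Definition Cnorm2 (a : C) : R := Re a * Re a + Im a * Im a.

Fixpoint csum (n : nat) (f : nat -> C) : C :=
  match n with O => C0 | S k => Cadd (csum k f) (f k) end.
Fixpoint rsum (n : nat) (f : nat -> R) : R :=
  match n with O => 0 | S k => rsum k f + f k end.

Definition Mat := nat -> nat -> C.
Definition mid : Mat := fun i j => if Nat.eqb i j then C1 else C0.
Definition madd (A B : Mat) : Mat := fun i j => Cadd (A i j) (B i j).
Definition msub (A B : Mat) : Mat := fun i j => Cadd (A i j) (Copp (B i j)).
Definition mscale (c : C) (A : Mat) : Mat := fun i j => Cmul c (A i j).
Definition mmul (n : nat) (A B : Mat) : Mat :=
  fun i j => csum n (fun k => Cmul (A i k) (B k j)).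
Definition madj (A : Mat) : Mat := fun i j => Cconj (A j i).
Definition mtr (n : nat) (A : Mat) : C := csum n (fun i => A i i).
Definition mcomm (n : nat) (A B : Mat) : Mat := msub (mmul n A B) (mmul n B A).
Definition manticomm (n : nat) (A B : Mat) : Mat := madd (mmul n A B) (mmul n B A).
Definition diagm (d : nat -> R) : Mat :=
  fun i j => if Nat.eqb i j then RtoC (d i) else C0.

Definition selfadjoint (n : nat) (A : Mat) : Prop :=
  forall i j, (i < n)%nat -> (j < n)%nat -> A i j = Cconj (A j i).
Definition unitary (n : nat) (U : Mat) : Prop :=
  forall i j, (i < n)%nat -> (j < n)%nat ->
    mmul n U (madj U) i j = mid i j /\ mmul n (madj U) U i j = mid i j.

(* Functional calculus: if rho = U diag(lam) U^*, then
   phi(rho) = U diag(phi(lam_k)) U^*. *)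
Definition fcalc (n : nat) (U : Mat) (lam : nat -> R) (phi : R -> R) : Mat :=
  mmul n (mmul n U (diagm (fun k => phi (lam k)))) (madj U).

(* Spectral data of a strictly positive density matrix rho = U diag(lam) U^*:
   U unitary, all eigenvalues > 0, trace 1.  Every rho in M_{n,+,1}(C)
   arises this way. *)
Definition density_spectral (n : nat) (U : Mat) (lam : nat -> R) : Prop :=
  unitary n U /\ (forall k, (k < n)%nat -> 0 < lam k) /\ rsum n lam = 1.

Definition centered (n : nat) (rho H : Mat) : Mat :=
  msub H (mscale (mtr n (mmul n rho H)) mid).

(* I_{rho,(f,g,h)}(H), J_{rho,(f,g,h)}(H) (these traces are real; we take the
   real part), U = sqrt(I J).  fr, gr, hr stand for f(rho), g(rho), h(rho). *)
Definition Ifun (n : nat) (rho fr gr hr H : Mat) : R :=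
  let H0 := centered n rho H in
  / 2 * Re (mtr n (mmul n (mmul n (mscale Ci (mcomm n fr H0))
                                   (mscale Ci (mcomm n gr H0))) hr)).
Definition Jfun (n : nat) (rho fr gr hr H : Mat) : R :=
  let H0 := centered n rho H in
  / 2 * Re (mtr n (mmul n (mmul n (manticomm n fr H0) (manticomm n gr H0)) hr)).
Definition Ufun (n : nat) (rho fr gr hr H : Mat) : R :=
  sqrt (Ifun n rho fr gr hr H * Jfun n rho fr gr hr H).

Definition is_inf (E : R -> Prop) (m : R) : Prop :=
  (forall y, E y -> m <= y) /\ (forall b, (forall y, E y -> b <= y) -> b <= m).
Definition is_sup (E : R -> Prop) (M : R) : Prop :=
  (forall y, E y -> y <= M) /\ (forall b, (forall y, E y -> y <= b) -> M <= b).

Definition logf (f : R -> R) : R -> R := fun x => ln (f x).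

Definition deriv_ratios (F G : R -> R) : R -> Prop :=
  fun r => exists x a b, 0 < x < 1 /\ derivable_pt_lim F x a /\
                         derivable_pt_lim G x b /\ r = b / a.

Definition admissible (f : R -> R) : Prop :=
  (forall x, 0 <= x <= 1 -> 0 <= f x) /\
  (forall x, 0 <= x <= 1 -> limit1_in f (fun y => 0 <= y <= 1) (f x) x) /\
  (forall x, 0 < x < 1 -> exists l, derivable_pt_lim f x l).

Definition CLI_monotone (f g : R -> R) : Prop :=
  (forall x y, 0 <= x <= 1 -> 0 <= y <= 1 -> 0 <= (f x - f y) * (g x - g y)) /\
  exists m M, is_inf (deriv_ratios (logf f) (logf g)) m /\
              is_sup (deriv_ratios (logf f) (logf g)) M /\ 0 <= m.

Definition CLI_antimonotone (f g : R -> R) : Prop :=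
  (forall x y, 0 <= x <= 1 -> 0 <= y <= 1 -> (f x - f y) * (g x - g y) <= 0) /\
  exists m M, is_inf (deriv_ratios (logf f) (logf g)) m /\
              is_sup (deriv_ratios (logf f) (logf g)) M /\ M <= 0.

Definition beta (m M n N : R) : R :=
  Rmin (Rmin (m / (1 + m + n) ^ 2) (m / (1 + m + N) ^ 2))
       (Rmin (M / (1 + M + n) ^ 2) (M / (1 + M + N) ^ 2)).

(* Diagonalise rho = U diag(lam) U^* and let a, b be the matrices of A_0, B_0
   in the eigenbasis. Writing f_j = f(lam_j) etc., one finds
     I(A) = sum_jk alpha_jk |a_jk|^2,   J(A) = sum_jk gamma_jk |a_jk|^2,
     Tr[f g h [A,B]] = sum_jk (f_j g_j h_j - f_k g_k h_k) a_jk b_kj,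
   with alpha_jk = (f_j - f_k)(g_j - g_k)(h_j + h_k)/4 and
   gamma_jk = (f_j + f_k)(g_j + g_k)(h_j + h_k)/4. Cauchy-Schwarz, applied once
   with the weights (alpha, gamma) and once with (gamma, alpha), reduces the
   theorem to the two-point inequality
     beta (f(x) g(x) h(x) - f(y) g(y) h(y))^2 <= alpha(x,y) gamma(x,y).
   By Cauchy's mean value theorem f(y) = f(x) e^t, g(y) = g(x) e^(mu t) and
   h(y) = h(x) e^(nu t) with mu in [m,M], nu in [n,N], and hypotheses (I)/(II)
   give 1 + mu <= nu or nu <= 0 <= 1 + mu + nu. Under that condition
     16 mu (e^((1+mu+nu)t) - 1)^2 <= (1+mu+nu)^2 (e^(2t) - 1)(e^(2 mu t) - 1)(e^(nu t) + 1)^2,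
   which follows from the monotonicity of sinh(x)/x on [0, +oo); finally
   beta <= mu / (1+mu+nu)^2. *)

From Coquelicot Require Import Coquelicot.
From Stdlib Require Import Reals Lra Lia Setoid Morphisms FunctionalExtensionality.
Open Scope R_scope.

Lemma le_of_derive_nonneg (f df : R -> R) (a b : R) :
  (forall x, a <= x <= b -> is_derive f x (df x)) ->
  (forall x, a <= x <= b -> 0 <= df x) -> a <= b -> f a <= f b.
Proof.
  intros Hd Hp Hab.
  destruct (MVT_gen f a b df) as [c [Hc Heq]];
    rewrite ?Rmin_left, ?Rmax_right in * by lra.
  - intros x Hx. apply Hd. lra.
  - intros x Hx. apply derivable_continuous_pt. exists (df x).
    apply is_derive_Reals, Hd. lra.
  - assert (0 <= df c) by (apply Hp; lra). nra.
Qed.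

(** * Hyperbolic functions *)

Lemma sinh_opp x : sinh (- x) = - sinh x.
Proof. unfold sinh. rewrite Ropp_involutive. lra. Qed.

Lemma cosh_opp x : cosh (- x) = cosh x.
Proof. unfold cosh. rewrite Ropp_involutive. lra. Qed.

Lemma sinh_add a b : sinh (a + b) = sinh a * cosh b + cosh a * sinh b.
Proof. unfold sinh, cosh. rewrite Ropp_plus_distr, !exp_plus. lra. Qed.

Lemma sinh_sub a b : sinh (a - b) = sinh a * cosh b - cosh a * sinh b.
Proof. unfold Rminus. rewrite sinh_add, sinh_opp, cosh_opp. lra. Qed.

Lemma sinh_nonneg x : 0 <= x -> 0 <= sinh x.
Proof.
  intros Hx. rewrite <- sinh_0.
  destruct (Req_dec x 0) as [->|Hx0]; [lra | left; apply sinh_lt; lra].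
Qed.

Lemma cosh_ge_1 x : 1 <= cosh x.
Proof.
  unfold cosh. rewrite exp_Ropp. assert (Hpos := exp_pos x).
  assert (0 <= (exp x - 1) ^ 2 / (2 * exp x)).
  { apply Rmult_le_pos; [apply pow2_ge_0 | left; apply Rinv_0_lt_compat; lra]. }
  replace ((exp x + / exp x) / 2) with ((exp x - 1) ^ 2 / (2 * exp x) + 1)
    by (field; lra).
  lra.
Qed.

Lemma cosh_le s r : 0 <= s <= r -> cosh s <= cosh r.
Proof.
  intros H. apply (le_of_derive_nonneg cosh sinh); try lra.
  - intros x _. apply is_derive_Reals, derivable_pt_lim_cosh.
  - intros x Hx. apply sinh_nonneg. lra.
Qed.

Lemma sinh_le_mul_cosh x : 0 <= x -> sinh x <= x * cosh x.
Proof.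
  intros Hx.
  assert (0 * cosh 0 - sinh 0 <= x * cosh x - sinh x); [|rewrite sinh_0 in *; lra].
  apply (le_of_derive_nonneg (fun z => z * cosh z - sinh z) (fun z => z * sinh z));
    try lra.
  - intros z _. unfold sinh, cosh. auto_derive; auto. lra.
  - intros z Hz. assert (0 <= sinh z) by (apply sinh_nonneg; lra). nra.
Qed.

(* [sinh x / x] is nondecreasing on [0, +oo), in cross-multiplied form. *)
Lemma sinh_div_le s r : 0 <= s <= r -> r * sinh s <= s * sinh r.
Proof.
  intros H.
  assert (s * sinh s - s * sinh s <= s * sinh r - r * sinh s); [|lra].
  apply (le_of_derive_nonneg (fun z => s * sinh z - z * sinh s)
                             (fun z => s * cosh z - sinh s)); try lra.
  - intros z _. unfold sinh, cosh. auto_derive; auto. lra.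
  - intros z Hz. assert (cosh s <= cosh z) by (apply cosh_le; lra).
    assert (sinh s <= s * cosh s) by (apply sinh_le_mul_cosh; lra). nra.
Qed.

Lemma sinh_sq_div_le s r : Rabs s <= Rabs r -> r ^ 2 * sinh s ^ 2 <= s ^ 2 * sinh r ^ 2.
Proof.
  intros Hsr.
  assert (Habs : forall z, z ^ 2 = Rabs z ^ 2 /\ sinh z ^ 2 = sinh (Rabs z) ^ 2).
  { intros z. rewrite pow2_abs. split; [reflexivity|].
    unfold Rabs; destruct Rcase_abs; [rewrite sinh_opp|]; ring. }
  destruct (Habs s) as [-> ->], (Habs r) as [-> ->].
  assert (H := sinh_div_le (Rabs s) (Rabs r) (conj (Rabs_pos s) Hsr)).
  assert (0 <= sinh (Rabs s)) by apply sinh_nonneg, Rabs_pos.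
  assert (0 <= Rabs s) by apply Rabs_pos.
  assert (Hsq : (Rabs r * sinh (Rabs s)) ^ 2 <= (Rabs s * sinh (Rabs r)) ^ 2)
    by (apply pow_incr; nra).
  lra.
Qed.

Lemma sinh_double_mul u v :
  sinh (2 * u) * sinh (2 * v) = sinh (u + v) ^ 2 - sinh (u - v) ^ 2.
Proof.
  replace (2 * u) with (u + u) by ring. replace (2 * v) with (v + v) by ring.
  rewrite !sinh_add, sinh_sub. unfold sinh, cosh. rewrite !exp_Ropp.
  assert (exp u > 0) by apply exp_pos. assert (exp v > 0) by apply exp_pos.
  field; lra.
Qed.

(* By [sinh_double_mul] this is [sinh_sq_div_le], as [u v >= 0] gives
   [|u - v| <= |u + v|]. *)
Lemma sinh_sum_sq_le u v :
  0 <= u * v -> 4 * u * v * sinh (u + v) ^ 2 <= (u + v) ^ 2 * (sinh (2 * u) * sinh (2 * v)).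
Proof.
  intros Huv. rewrite sinh_double_mul.
  assert (Habs : Rabs (u - v) <= Rabs (u + v)).
  { apply Rsqr_le_abs_0. unfold Rsqr. nra. }
  assert (H := sinh_sq_div_le _ _ Habs).
  replace (4 * u * v) with ((u + v) ^ 2 - (u - v) ^ 2) by ring.
  nra.
Qed.

Lemma sinh_shift_le a b :
  0 <= a -> a <= b \/ (b <= 0 /\ 0 <= a + b) ->
  0 <= a * sinh (a + b) <= (a + b) * cosh b * sinh a.
Proof.
  intros Ha Hab.
  assert (Hsa : 0 <= sinh a) by (apply sinh_nonneg; lra).
  assert (Hsab : 0 <= sinh (a + b)) by (apply sinh_nonneg; lra).
  assert (Hch := cosh_ge_1 b).
  split; [apply Rmult_le_pos; lra|].
  destruct Hab as [Hab | [Hb Hab]].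
  - assert (H := sinh_div_le (b - a) (b + a) ltac:(lra)).
    rewrite sinh_add, sinh_sub in H. rewrite sinh_add. nra.
  - assert (H := sinh_div_le (a + b) a ltac:(lra)).
    assert (0 <= (a + b) * sinh a) by (apply Rmult_le_pos; lra). nra.
Qed.

Definition exponent_cond (mu nu : R) : Prop :=
  1 + mu <= nu \/ (nu <= 0 /\ 0 <= 1 + mu + nu).

Lemma sinh_key_ineq_nonneg u mu nu :
  0 <= u -> 0 <= mu -> exponent_cond mu nu ->
  4 * mu * sinh ((1 + mu + nu) * u) ^ 2 <=
  (1 + mu + nu) ^ 2 * (sinh (2 * u) * sinh (2 * (mu * u))) * cosh (nu * u) ^ 2.
Proof.
  intros Hu Hmu Hc.
  destruct (Req_dec u 0) as [->|Hu0].
  { rewrite !Rmult_0_r, sinh_0. lra. }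
  set (a := (1 + mu) * u). set (b := nu * u).
  replace ((1 + mu + nu) * u) with (a + b) by (unfold a, b; ring).
  assert (Ha : 0 < a) by (unfold a; nra).
  assert (Hshift : a * sinh (a + b) <= (a + b) * cosh b * sinh a /\ 0 <= a * sinh (a + b)).
  { destruct (sinh_shift_le a b) as [H0 H1]; [lra| |tauto].
    destruct Hc as [Hc | [Hc1 Hc2]]; [left | right; split]; unfold a, b; nra. }
  assert (Hsq : a ^ 2 * sinh (a + b) ^ 2 <= (a + b) ^ 2 * cosh b ^ 2 * sinh a ^ 2).
  { destruct Hshift. assert ((a * sinh (a + b)) ^ 2 <= ((a + b) * cosh b * sinh a) ^ 2)
      by (apply pow_incr; lra). lra. }
  assert (Hamgm := sinh_sum_sq_le u (mu * u) ltac:(nra)).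
  replace (u + mu * u) with a in Hamgm by (unfold a; ring).
  set (P := sinh (2 * u) * sinh (2 * (mu * u))) in *.
  assert (HC : 0 <= (1 + mu + nu) ^ 2 * cosh b ^ 2)
    by (apply Rmult_le_pos; apply pow2_ge_0).
  apply Rmult_le_reg_l with (a ^ 2); [apply pow_lt; lra|].
  apply Rle_trans with ((1 + mu + nu) ^ 2 * cosh b ^ 2 * (4 * u * (mu * u) * sinh a ^ 2)).
  - replace ((1 + mu + nu) ^ 2 * cosh b ^ 2 * (4 * u * (mu * u) * sinh a ^ 2))
      with (4 * mu * ((a + b) ^ 2 * cosh b ^ 2 * sinh a ^ 2)) by (unfold a, b; ring).
    replace (a ^ 2 * (4 * mu * sinh (a + b) ^ 2))
      with (4 * mu * (a ^ 2 * sinh (a + b) ^ 2)) by ring.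
    apply Rmult_le_compat_l; lra.
  - replace (a ^ 2 * ((1 + mu + nu) ^ 2 * P * cosh b ^ 2))
      with ((1 + mu + nu) ^ 2 * cosh b ^ 2 * (a ^ 2 * P)) by ring.
    apply Rmult_le_compat_l; lra.
Qed.

Lemma sinh_key_ineq u mu nu :
  0 <= mu -> exponent_cond mu nu ->
  4 * mu * sinh ((1 + mu + nu) * u) ^ 2 <=
  (1 + mu + nu) ^ 2 * (sinh (2 * u) * sinh (2 * (mu * u))) * cosh (nu * u) ^ 2.
Proof.
  intros Hmu Hc. destruct (Rle_dec 0 u); [now apply sinh_key_ineq_nonneg|].
  assert (H := sinh_key_ineq_nonneg (- u) mu nu ltac:(lra) Hmu Hc).
  rewrite !Ropp_mult_distr_r_reverse, !sinh_opp, cosh_opp in H.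
  eapply Rle_trans; [|eapply Rle_trans; [exact H|]]; right; ring.
Qed.

(** * The exponential inequality *)

Lemma exp_double_sub_1 z : exp (2 * z) - 1 = 2 * exp z * sinh z.
Proof.
  unfold sinh. rewrite exp_Ropp. replace (2 * z) with (z + z) by ring.
  rewrite exp_plus. assert (exp z > 0) by apply exp_pos. field. lra.
Qed.

Lemma exp_double_add_1 z : exp (2 * z) + 1 = 2 * exp z * cosh z.
Proof.
  unfold cosh. rewrite exp_Ropp. replace (2 * z) with (z + z) by ring.
  rewrite exp_plus. assert (exp z > 0) by apply exp_pos. field. lra.
Qed.

Lemma exp_sq z : exp z ^ 2 = exp (2 * z).
Proof. simpl. rewrite Rmult_1_r, <- exp_plus. f_equal. ring. Qed.

Lemma exp_key_ineq t mu nu :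
  0 <= mu -> exponent_cond mu nu ->
  16 * mu * (exp t * exp (mu * t) * exp (nu * t) - 1) ^ 2 <=
  (1 + mu + nu) ^ 2 * (exp t ^ 2 - 1) * (exp (mu * t) ^ 2 - 1) * (exp (nu * t) + 1) ^ 2.
Proof.
  intros Hmu Hc. set (u := t / 2). set (s := 1 + mu + nu).
  assert (Eexp : forall a b, exp a * exp b = exp (a + b)) by (intros; rewrite exp_plus; ring).
  replace (exp t * exp (mu * t) * exp (nu * t)) with (exp (2 * (s * u)))
    by (rewrite !Eexp; f_equal; unfold s, u; field).
  rewrite !exp_sq.
  replace (2 * t) with (2 * (2 * u)) by (unfold u; field).
  replace (2 * (mu * t)) with (2 * (2 * (mu * u))) by (unfold u; field).
  replace (nu * t) with (2 * (nu * u)) by (unfold u; field).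
  rewrite !exp_double_sub_1, exp_double_add_1.
  assert (Esq : exp (s * u) ^ 2 = exp (2 * u) * exp (2 * (mu * u)) * exp (nu * u) ^ 2).
  { rewrite !exp_sq, !Eexp. f_equal. unfold s. ring. }
  assert (Hkey := sinh_key_ineq u mu nu Hmu Hc). fold s in Hkey.
  assert (0 <= exp (s * u) ^ 2) by apply pow2_ge_0.
  replace (16 * mu * (2 * exp (s * u) * sinh (s * u)) ^ 2)
    with (16 * exp (s * u) ^ 2 * (4 * mu * sinh (s * u) ^ 2)) by ring.
  replace (s ^ 2 * (2 * exp (2 * u) * sinh (2 * u)) *
           (2 * exp (2 * (mu * u)) * sinh (2 * (mu * u))) *
           (2 * exp (nu * u) * cosh (nu * u)) ^ 2)
    with (16 * exp (s * u) ^ 2 *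
          (s ^ 2 * (sinh (2 * u) * sinh (2 * (mu * u))) * cosh (nu * u) ^ 2))
    by (rewrite Esq; ring).
  apply Rmult_le_compat_l; lra.
Qed.

Lemma exp_sub_1_mul_nonneg a c : 0 <= a * c -> 0 <= (exp a - 1) * (exp c - 1).
Proof.
  intros Hac. rewrite <- exp_0.
  assert (Hle : forall x y, x <= y -> exp x <= exp y).
  { intros x y Hxy. destruct (Req_dec x y) as [->|]; [lra|].
    left; apply exp_increasing; lra. }
  destruct (Rle_dec 0 a).
  - destruct (Req_dec a 0) as [->|]; [lra|].
    assert (exp 0 <= exp a) by (apply Hle; lra).
    assert (exp 0 <= exp c) by (apply Hle; nra). nra.
  - assert (exp a <= exp 0) by (apply Hle; lra).
    assert (exp c <= exp 0) by (apply Hle; nra). nra.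
Qed.

Lemma exp_pair_ineq t mu nu b :
  0 <= mu -> exponent_cond mu nu ->
  (1 + mu + nu <> 0 -> b <= mu / (1 + mu + nu) ^ 2) ->
  16 * b * (exp t * exp (mu * t) * exp (nu * t) - 1) ^ 2 <=
  (exp t ^ 2 - 1) * (exp (mu * t) ^ 2 - 1) * (exp (nu * t) + 1) ^ 2.
Proof.
  intros Hmu Hc Hb. set (s := 1 + mu + nu) in *.
  assert (HE : 0 <= (exp t * exp (mu * t) * exp (nu * t) - 1) ^ 2) by apply pow2_ge_0.
  destruct (Req_dec s 0) as [Hs | Hs].
  - replace (exp t * exp (mu * t) * exp (nu * t)) with 1.
    2:{ rewrite <- !exp_plus, <- exp_0. f_equal. unfold s in Hs. nra. }
    rewrite !exp_sq.
    assert (H := exp_sub_1_mul_nonneg (2 * t) (2 * (mu * t)) ltac:(nra)).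
    assert (0 <= (exp (nu * t) + 1) ^ 2) by apply pow2_ge_0.
    replace (16 * b * (1 - 1) ^ 2) with 0 by ring.
    apply Rmult_le_pos; lra.
  - assert (Hs2 : 0 < s ^ 2) by (apply pow2_gt_0; exact Hs).
    assert (Hkey := exp_key_ineq t mu nu Hmu Hc). fold s in Hkey.
    apply Rle_trans with (16 * (mu / s ^ 2) *
      (exp t * exp (mu * t) * exp (nu * t) - 1) ^ 2).
    + apply Rmult_le_compat_r; [lra|]. specialize (Hb Hs). lra.
    + apply Rmult_le_reg_l with (s ^ 2); [exact Hs2|].
      replace (s ^ 2 * (16 * (mu / s ^ 2) * (exp t * exp (mu * t) * exp (nu * t) - 1) ^ 2))
        with (16 * mu * (exp t * exp (mu * t) * exp (nu * t) - 1) ^ 2) by (field; lra).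
      lra.
Qed.

(** * Complex numbers and finite sums *)

Lemma C_eq a b : Re a = Re b -> Im a = Im b -> a = b.
Proof. destruct a, b; simpl; intros; subst; auto. Qed.

Definition Csub a b := Cadd a (Copp b).

Lemma C_ring : ring_theory C0 C1 Cadd Cmul Csub Copp (@eq C).
Proof. constructor; intros; apply C_eq; unfold Csub, C0, C1, RtoC; simpl; ring. Qed.
Add Ring C_ring : C_ring.

Lemma Cnorm2_nonneg z : 0 <= Cnorm2 z.
Proof.
  destruct z as [x y]. unfold Cnorm2; simpl.
  assert (0 <= x * x) by apply Rle_0_sqr. assert (0 <= y * y) by apply Rle_0_sqr. lra.
Qed.

Lemma Cnorm2_conj z : Cnorm2 (Cconj z) = Cnorm2 z.
Proof. destruct z; unfold Cnorm2; simpl; ring. Qed.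

Lemma Cnorm2_mul z w : Cnorm2 (Cmul z w) = Cnorm2 z * Cnorm2 w.
Proof. destruct z, w; unfold Cnorm2; simpl; ring. Qed.

Lemma Cnorm2_RtoC r : Cnorm2 (RtoC r) = r ^ 2.
Proof. unfold Cnorm2, RtoC; simpl; ring. Qed.

Lemma csum_ext n f g : (forall k, (k < n)%nat -> f k = g k) -> csum n f = csum n g.
Proof. induction n; simpl; intros H; auto. rewrite IHn, H; auto. Qed.

Lemma csum_zero n f : (forall k, (k < n)%nat -> f k = C0) -> csum n f = C0.
Proof. induction n; simpl; intros H; auto. rewrite IHn, H; auto. ring. Qed.

Lemma csum_add n f g : csum n (fun k => Cadd (f k) (g k)) = Cadd (csum n f) (csum n g).
Proof. induction n; simpl; [|rewrite IHn]; ring. Qed.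

Lemma csum_opp n f : csum n (fun k => Copp (f k)) = Copp (csum n f).
Proof. induction n; simpl; [|rewrite IHn]; ring. Qed.

Lemma csum_mul_l n c f : csum n (fun k => Cmul c (f k)) = Cmul c (csum n f).
Proof. induction n; simpl; [|rewrite IHn]; ring. Qed.

Lemma csum_mul_r n c f : csum n (fun k => Cmul (f k) c) = Cmul (csum n f) c.
Proof. induction n; simpl; [|rewrite IHn]; ring. Qed.

Lemma csum_swap n m (f : nat -> nat -> C) :
  csum n (fun i => csum m (fun j => f i j)) = csum m (fun j => csum n (fun i => f i j)).
Proof.
  induction n; simpl.
  - rewrite csum_zero; auto.
  - rewrite IHn, <- csum_add. reflexivity.
Qed.

Lemma csum_conj n f : Cconj (csum n f) = csum n (fun k => Cconj (f k)).
Proof.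
  induction n; simpl; [apply C_eq; simpl; ring|].
  rewrite <- IHn. apply C_eq; simpl; ring.
Qed.

Lemma csum_delta n i F : (i < n)%nat ->
  csum n (fun k => if Nat.eqb i k then F k else C0) = F i.
Proof.
  induction n; intros Hi; [lia|]. simpl.
  destruct (Nat.eq_dec i n) as [->|Hne].
  - rewrite Nat.eqb_refl, csum_zero; [ring|].
    intros k Hk. destruct (Nat.eqb_spec n k); [lia|auto].
  - rewrite IHn by lia. destruct (Nat.eqb_spec i n); [lia|ring].
Qed.

Lemma Re_csum n f : Re (csum n f) = rsum n (fun k => Re (f k)).
Proof. induction n; simpl; [|rewrite IHn]; auto. Qed.

Lemma Im_csum_zero n f : (forall k, (k < n)%nat -> Im (f k) = 0) -> Im (csum n f) = 0.
Proof. induction n; simpl; intros Hf; [reflexivity|]. rewrite IHn, Hf; auto. ring. Qed.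

Lemma rsum_ext n f g : (forall k, (k < n)%nat -> f k = g k) -> rsum n f = rsum n g.
Proof. induction n; simpl; intros H; auto. rewrite IHn, H; auto. Qed.

Lemma rsum_add n (f g : nat -> R) : rsum n (fun k => f k + g k) = rsum n f + rsum n g.
Proof. induction n; simpl; [|rewrite IHn]; ring. Qed.

Lemma rsum_scal n c (f : nat -> R) : rsum n (fun k => c * f k) = c * rsum n f.
Proof. induction n; simpl; [|rewrite IHn]; ring. Qed.

Lemma rsum_swap n m (f : nat -> nat -> R) :
  rsum n (fun i => rsum m (fun j => f i j)) = rsum m (fun j => rsum n (fun i => f i j)).
Proof.
  induction n; simpl.
  - induction m; simpl; [|rewrite <- IHm]; ring.
  - rewrite IHn, <- rsum_add. reflexivity.
Qed.

Lemma rsum_nonneg n f : (forall k, (k < n)%nat -> 0 <= f k) -> 0 <= rsum n f.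
Proof.
  induction n; simpl; intros H; [lra|].
  assert (0 <= f n) by (apply H; lia).
  assert (0 <= rsum n f) by (apply IHn; intros; apply H; lia). lra.
Qed.

Lemma rsum_ge_term n f k :
  (k < n)%nat -> (forall i, (i < n)%nat -> 0 <= f i) -> f k <= rsum n f.
Proof.
  induction n; intros Hk H; [lia|]. simpl.
  assert (0 <= f n) by (apply H; lia).
  destruct (Nat.eq_dec k n) as [->|Hne].
  - assert (0 <= rsum n f) by (apply rsum_nonneg; intros; apply H; lia). lra.
  - assert (f k <= rsum n f) by (apply IHn; [lia|intros; apply H; lia]). lra.
Qed.

(** * Matrices *)

(* A [Mat] is only meaningful on its [n x n] block, so equalities are taken
   up to [meq n]. *)
Record meq (n : nat) (X Y : Mat) : Prop := MEq
  { meq_ap : forall i j, (i < n)%nat -> (j < n)%nat -> X i j = Y i j }.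
Arguments meq_ap {n X Y}.

#[local] Instance meq_equiv n : Equivalence (meq n).
Proof.
  constructor.
  - intros X; constructor; auto.
  - intros X Y H; constructor; intros i j Hi Hj; symmetry; apply H; auto.
  - intros X Y Z H1 H2; constructor; intros i j Hi Hj.
    rewrite (meq_ap H1), (meq_ap H2); auto.
Qed.

#[local] Instance mmul_proper n : Proper (meq n ==> meq n ==> meq n) (mmul n).
Proof.
  intros X X' HX Y Y' HY; constructor; intros i j Hi Hj. apply csum_ext.
  intros k Hk. rewrite (meq_ap HX), (meq_ap HY); auto.
Qed.

#[local] Instance madd_proper n : Proper (meq n ==> meq n ==> meq n) madd.
Proof.
  intros X X' HX Y Y' HY; constructor; intros i j Hi Hj. unfold madd.
  rewrite (meq_ap HX), (meq_ap HY); auto.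
Qed.

#[local] Instance msub_proper n : Proper (meq n ==> meq n ==> meq n) msub.
Proof.
  intros X X' HX Y Y' HY; constructor; intros i j Hi Hj. unfold msub.
  rewrite (meq_ap HX), (meq_ap HY); auto.
Qed.

#[local] Instance mscale_proper n c : Proper (meq n ==> meq n) (mscale c).
Proof. intros X X' HX; constructor; intros i j Hi Hj. unfold mscale. rewrite (meq_ap HX); auto. Qed.

#[local] Instance mcomm_proper n : Proper (meq n ==> meq n ==> meq n) (mcomm n).
Proof. intros X X' HX Y Y' HY. unfold mcomm. rewrite HX, HY. reflexivity. Qed.

#[local] Instance manticomm_proper n : Proper (meq n ==> meq n ==> meq n) (manticomm n).
Proof. intros X X' HX Y Y' HY. unfold manticomm. rewrite HX, HY. reflexivity. Qed.

#[local] Instance mtr_proper n : Proper (meq n ==> eq) (mtr n).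
Proof. intros X X' HX. apply csum_ext. intros k Hk. apply (meq_ap HX); auto. Qed.

Lemma mmul_assoc n X Y Z : mmul n (mmul n X Y) Z = mmul n X (mmul n Y Z).
Proof.
  extensionality i; extensionality j. unfold mmul.
  transitivity (csum n (fun k => csum n (fun l => Cmul (X i l) (Cmul (Y l k) (Z k j))))).
  - apply csum_ext; intros k _. rewrite <- csum_mul_r. apply csum_ext; intros; ring.
  - rewrite csum_swap. apply csum_ext; intros l _. rewrite <- csum_mul_l. reflexivity.
Qed.

Lemma mmul_mid_l n X : meq n (mmul n mid X) X.
Proof.
  constructor; intros i j Hi Hj. unfold mmul, mid.
  rewrite <- (csum_delta n i (fun k => X k j)) by auto. apply csum_ext; intros k _.
  destruct (Nat.eqb i k); apply C_eq; simpl; ring.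
Qed.

Lemma mmul_mid_r n X : meq n (mmul n X mid) X.
Proof.
  constructor; intros i j Hi Hj. unfold mmul, mid.
  rewrite <- (csum_delta n j (fun k => X i k)) by auto. apply csum_ext; intros k _.
  rewrite Nat.eqb_sym. destruct (Nat.eqb j k); apply C_eq; simpl; ring.
Qed.

Lemma mtr_mmul_comm n X Y : mtr n (mmul n X Y) = mtr n (mmul n Y X).
Proof. unfold mtr, mmul. rewrite csum_swap. apply csum_ext; intros; apply csum_ext; intros; ring. Qed.

Lemma madj_mmul n X Y : madj (mmul n X Y) = mmul n (madj Y) (madj X).
Proof.
  extensionality i; extensionality j. unfold madj, mmul. rewrite csum_conj.
  apply csum_ext; intros. apply C_eq; simpl; ring.
Qed.

Lemma madj_madj X : madj (madj X) = X.
Proof.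
  extensionality i; extensionality j. unfold madj, Cconj.
  destruct (X i j); simpl. f_equal; ring.
Qed.

Lemma selfadjoint_madj n A : selfadjoint n A -> meq n (madj A) A.
Proof.
  intros H; constructor; intros i j Hi Hj. unfold madj.
  rewrite H by auto. destruct (A i j). unfold Cconj; simpl. f_equal; ring.
Qed.

Lemma mmul_msub_l n X Y Z : mmul n (msub X Y) Z = msub (mmul n X Z) (mmul n Y Z).
Proof.
  extensionality i; extensionality j. unfold mmul, msub.
  rewrite <- csum_opp, <- csum_add. apply csum_ext; intros; ring.
Qed.

Lemma mmul_msub_r n X Y Z : mmul n X (msub Y Z) = msub (mmul n X Y) (mmul n X Z).
Proof.
  extensionality i; extensionality j. unfold mmul, msub.
  rewrite <- csum_opp, <- csum_add. apply csum_ext; intros; ring.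
Qed.

Lemma mmul_madd_l n X Y Z : mmul n (madd X Y) Z = madd (mmul n X Z) (mmul n Y Z).
Proof.
  extensionality i; extensionality j. unfold mmul, madd.
  rewrite <- csum_add. apply csum_ext; intros; ring.
Qed.

Lemma mmul_madd_r n X Y Z : mmul n X (madd Y Z) = madd (mmul n X Y) (mmul n X Z).
Proof.
  extensionality i; extensionality j. unfold mmul, madd.
  rewrite <- csum_add. apply csum_ext; intros; ring.
Qed.

Lemma mmul_mscale_l n c X Y : mmul n (mscale c X) Y = mscale c (mmul n X Y).
Proof.
  extensionality i; extensionality j. unfold mmul, mscale.
  rewrite <- csum_mul_l. apply csum_ext; intros; ring.
Qed.

Lemma mmul_mscale_r n c X Y : mmul n X (mscale c Y) = mscale c (mmul n X Y).
Proof.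
  extensionality i; extensionality j. unfold mmul, mscale.
  rewrite <- csum_mul_l. apply csum_ext; intros; ring.
Qed.

Lemma mmul_diagm_l n d X i j : (i < n)%nat -> mmul n (diagm d) X i j = Cmul (RtoC (d i)) (X i j).
Proof.
  intros Hi. unfold mmul, diagm.
  rewrite <- (csum_delta n i (fun k => Cmul (RtoC (d k)) (X k j))) by auto.
  apply csum_ext; intros. destruct (Nat.eqb_spec i k); subst; auto. ring.
Qed.

Lemma mmul_diagm_r n d X i j : (j < n)%nat -> mmul n X (diagm d) i j = Cmul (X i j) (RtoC (d j)).
Proof.
  intros Hj. unfold mmul, diagm.
  rewrite <- (csum_delta n j (fun k => Cmul (X i k) (RtoC (d k)))) by auto.
  apply csum_ext; intros. rewrite Nat.eqb_sym. destruct (Nat.eqb_spec j k); subst; auto. ring.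
Qed.

Section UnitaryConjugation.
Variables (n : nat) (U : Mat).
Hypothesis HU : unitary n U.

Definition uconj (X : Mat) : Mat := mmul n (mmul n U X) (madj U).
Definition uconj_inv (X : Mat) : Mat := mmul n (mmul n (madj U) X) U.

Lemma madj_U_mul_U : meq n (mmul n (madj U) U) mid.
Proof. constructor; intros i j Hi Hj. apply HU; auto. Qed.

Lemma U_mul_madj_U : meq n (mmul n U (madj U)) mid.
Proof. constructor; intros i j Hi Hj. apply HU; auto. Qed.

Lemma uconj_mmul X Y : meq n (mmul n (uconj X) (uconj Y)) (uconj (mmul n X Y)).
Proof.
  unfold uconj. rewrite !mmul_assoc, <- (mmul_assoc n (madj U) U), madj_U_mul_U.
  rewrite <- (mmul_assoc n mid), mmul_mid_l. reflexivity.
Qed.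

Lemma uconj_msub X Y : uconj (msub X Y) = msub (uconj X) (uconj Y).
Proof. unfold uconj. rewrite mmul_msub_r, mmul_msub_l. reflexivity. Qed.

Lemma uconj_madd X Y : uconj (madd X Y) = madd (uconj X) (uconj Y).
Proof. unfold uconj. rewrite mmul_madd_r, mmul_madd_l. reflexivity. Qed.

Lemma uconj_mscale c X : uconj (mscale c X) = mscale c (uconj X).
Proof. unfold uconj. rewrite mmul_mscale_r, mmul_mscale_l. reflexivity. Qed.

Lemma uconj_mcomm X Y : meq n (mcomm n (uconj X) (uconj Y)) (uconj (mcomm n X Y)).
Proof. unfold mcomm. rewrite !uconj_mmul, uconj_msub. reflexivity. Qed.

Lemma uconj_manticomm X Y : meq n (manticomm n (uconj X) (uconj Y)) (uconj (manticomm n X Y)).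
Proof. unfold manticomm. rewrite !uconj_mmul, uconj_madd. reflexivity. Qed.

Lemma mtr_uconj X : mtr n (uconj X) = mtr n X.
Proof.
  unfold uconj. rewrite mtr_mmul_comm, <- mmul_assoc, madj_U_mul_U, mmul_mid_l.
  reflexivity.
Qed.

Lemma uconj_mid : meq n (uconj mid) mid.
Proof. unfold uconj. rewrite mmul_mid_r. apply U_mul_madj_U. Qed.

Lemma uconjK A : meq n (uconj (uconj_inv A)) A.
Proof.
  unfold uconj, uconj_inv. rewrite !mmul_assoc, U_mul_madj_U, mmul_mid_r.
  rewrite <- mmul_assoc, U_mul_madj_U, mmul_mid_l. reflexivity.
Qed.

Lemma uconj_inv_selfadjoint A : meq n (madj A) A -> meq n (madj (uconj_inv A)) (uconj_inv A).
Proof.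
  intros H. unfold uconj_inv. rewrite !madj_mmul, madj_madj, H, mmul_assoc. reflexivity.
Qed.

End UnitaryConjugation.

(** * [I] and [J] in an eigenbasis of [rho] *)

Lemma mtr_mmul_diagm_r d X Y h : mtr d (mmul d (mmul d X Y) (diagm h)) =
  csum d (fun j => Cmul (csum d (fun k => Cmul (X j k) (Y k j))) (RtoC (h j))).
Proof. apply csum_ext; intros j Hj. rewrite mmul_diagm_r by auto. reflexivity. Qed.

Lemma mcomm_diagm_entry d F a j k : (j < d)%nat -> (k < d)%nat ->
  mcomm d (diagm F) a j k = Cmul (RtoC (F j - F k)) (a j k).
Proof.
  intros. unfold mcomm, msub. rewrite mmul_diagm_l, mmul_diagm_r by auto.
  apply C_eq; simpl; ring.
Qed.

Lemma manticomm_diagm_entry d F a j k : (j < d)%nat -> (k < d)%nat ->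
  manticomm d (diagm F) a j k = Cmul (RtoC (F j + F k)) (a j k).
Proof.
  intros. unfold manticomm, madd. rewrite mmul_diagm_l, mmul_diagm_r by auto.
  apply C_eq; simpl; ring.
Qed.

Lemma mtr_diagm3_mcomm d F G H a b :
  mtr d (mmul d (mmul d (mmul d (diagm F) (diagm G)) (diagm H)) (mcomm d a b)) =
  csum d (fun j => csum d (fun k =>
    Cmul (RtoC (F j * G j * H j - F k * G k * H k)) (Cmul (a j k) (b k j)))).
Proof.
  set (w j := RtoC (F j * G j * H j)).
  rewrite !mmul_assoc. unfold mtr.
  transitivity (csum d (fun j => Cadd
     (csum d (fun k => Cmul (w j) (Cmul (a j k) (b k j))))
     (Copp (csum d (fun k => Cmul (w j) (Cmul (b j k) (a k j))))))).
  { apply csum_ext; intros j Hj. rewrite !mmul_diagm_l by auto.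
    unfold mcomm, msub, mmul. rewrite !csum_mul_l. apply C_eq; simpl; ring. }
  rewrite csum_add, csum_opp.
  rewrite (csum_swap d d (fun j k => Cmul (w j) (Cmul (b j k) (a k j)))).
  rewrite <- csum_opp, <- csum_add. apply csum_ext; intros j Hj.
  rewrite <- csum_opp, <- csum_add. apply csum_ext; intros k Hk.
  unfold w. apply C_eq; simpl; ring.
Qed.

Definition hermitian_on (d : nat) (a : Mat) : Prop :=
  forall j k, (j < d)%nat -> (k < d)%nat -> a k j = Cconj (a j k).

Lemma Re_tr_comm_comm_diagm d F G H a : hermitian_on d a ->
  Re (mtr d (mmul d (mmul d (mscale Ci (mcomm d (diagm F) a))
                            (mscale Ci (mcomm d (diagm G) a))) (diagm H))) =
  rsum d (fun j => rsum d (fun k => (F j - F k) * (G j - G k) * Cnorm2 (a j k) * H j)).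
Proof.
  intros Ha. rewrite mtr_mmul_diagm_r, Re_csum. apply rsum_ext; intros j Hj.
  rewrite <- csum_mul_r, Re_csum. apply rsum_ext; intros k Hk.
  unfold mscale. rewrite !mcomm_diagm_entry, (Ha j k) by auto.
  destruct (a j k). unfold Cnorm2, Cconj, RtoC; simpl. ring.
Qed.

Lemma Re_tr_acomm_acomm_diagm d F G H a : hermitian_on d a ->
  Re (mtr d (mmul d (mmul d (manticomm d (diagm F) a)
                            (manticomm d (diagm G) a)) (diagm H))) =
  rsum d (fun j => rsum d (fun k => (F j + F k) * (G j + G k) * Cnorm2 (a j k) * H j)).
Proof.
  intros Ha. rewrite mtr_mmul_diagm_r, Re_csum. apply rsum_ext; intros j Hj.
  rewrite <- csum_mul_r, Re_csum. apply rsum_ext; intros k Hk.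
  rewrite !manticomm_diagm_entry, (Ha j k) by auto.
  destruct (a j k). unfold Cnorm2, Cconj, RtoC; simpl. ring.
Qed.

Lemma rsum2_symmetrize d (X : nat -> nat -> R) (w : nat -> R) :
  (forall j k, (j < d)%nat -> (k < d)%nat -> X j k = X k j) ->
  rsum d (fun j => rsum d (fun k => X j k * w j)) =
  rsum d (fun j => rsum d (fun k => X j k * ((w j + w k) / 2))).
Proof.
  intros Hs.
  assert (E : rsum d (fun j => rsum d (fun k => X j k * w k)) =
              rsum d (fun j => rsum d (fun k => X j k * w j))).
  { rewrite rsum_swap. apply rsum_ext; intros; apply rsum_ext; intros. rewrite Hs; auto. }
  transitivity (/ 2 * (rsum d (fun j => rsum d (fun k => X j k * w j)) +
                       rsum d (fun j => rsum d (fun k => X j k * w k)))).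
  - rewrite E. field.
  - rewrite <- rsum_add, <- rsum_scal. apply rsum_ext; intros.
    rewrite <- rsum_add, <- rsum_scal. apply rsum_ext; intros. field.
Qed.

Definition wnorm2 (d : nat) (w : nat -> nat -> R) (a : Mat) : R :=
  rsum d (fun j => rsum d (fun k => w j k * Cnorm2 (a j k))).

Lemma wnorm2_nonneg d w a :
  (forall j k, (j < d)%nat -> (k < d)%nat -> 0 <= w j k) -> 0 <= wnorm2 d w a.
Proof.
  intros Hw. apply rsum_nonneg; intros j Hj. apply rsum_nonneg; intros k Hk.
  apply Rmult_le_pos; [auto | apply Cnorm2_nonneg].
Qed.

Definition I_weight (lam : nat -> R) (f g h : R -> R) (j k : nat) : R :=
  (f (lam j) - f (lam k)) * (g (lam j) - g (lam k)) * (h (lam j) + h (lam k)) / 4.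

Definition J_weight (lam : nat -> R) (f g h : R -> R) (j k : nat) : R :=
  (f (lam j) + f (lam k)) * (g (lam j) + g (lam k)) * (h (lam j) + h (lam k)) / 4.

Section Eigenbasis.
Variables (d : nat) (U : Mat) (lam : nat -> R).
Hypothesis HU : unitary d U.

Let D (phi : R -> R) : Mat := diagm (fun k => phi (lam k)).
Let rho := fcalc d U lam (fun x => x).

(* The matrix of [H_0] in the eigenbasis of [rho]. *)
Definition coords0 (A : Mat) : Mat :=
  msub (uconj_inv d U A) (mscale (mtr d (mmul d rho A)) mid).

Lemma centered_uconj A : meq d (centered d rho A) (uconj d U (coords0 A)).
Proof.
  unfold centered, coords0. rewrite uconj_msub, uconj_mscale.
  rewrite uconjK, uconj_mid by auto. reflexivity.
Qed.

Lemma uconj_inv_hermitian A : selfadjoint d A -> hermitian_on d (uconj_inv d U A).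
Proof.
  intros HA j k Hj Hk.
  assert (H := meq_ap (uconj_inv_selfadjoint d U A (selfadjoint_madj d A HA)) j k Hj Hk).
  unfold madj in H. rewrite <- H.
  destruct (uconj_inv d U A k j); unfold Cconj; simpl; f_equal; ring.
Qed.

Lemma Im_mtr_rho A : selfadjoint d A -> Im (mtr d (mmul d rho A)) = 0.
Proof.
  intros HA. unfold rho.
  rewrite <- (mtr_proper d _ _ (mmul_proper d _ _ (reflexivity _) _ _ (uconjK d U HU A))).
  change (fcalc d U lam (fun x => x)) with (uconj d U (D (fun x => x))).
  rewrite uconj_mmul, mtr_uconj by auto.
  apply Im_csum_zero. intros k Hk. unfold D. rewrite mmul_diagm_l by auto.
  assert (Hr := uconj_inv_hermitian A HA k k Hk Hk).
  destruct (uconj_inv d U A k k) as [x y]. unfold Cconj in Hr. simpl in *.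
  injection Hr. intros. nra.
Qed.

Lemma coords0_hermitian A : selfadjoint d A -> hermitian_on d (coords0 A).
Proof.
  intros HA j k Hj Hk. unfold coords0, msub, mscale.
  rewrite (uconj_inv_hermitian A HA j k) by auto.
  assert (Hc := Im_mtr_rho A HA). unfold mid. rewrite Nat.eqb_sym.
  destruct (mtr d (mmul d rho A)) as [x y]; simpl in Hc; subst.
  destruct (uconj_inv d U A j k), (Nat.eqb j k); apply C_eq; simpl; ring.
Qed.

Lemma coords0_offdiag A j k : j <> k -> coords0 A j k = uconj_inv d U A j k.
Proof.
  intros H. unfold coords0, msub, mscale, mid.
  destruct (Nat.eqb_spec j k); [contradiction|]. apply C_eq; simpl; ring.
Qed.

Lemma Ifun_eigen (f g h : R -> R) A : selfadjoint d A ->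
  Ifun d rho (fcalc d U lam f) (fcalc d U lam g) (fcalc d U lam h) A =
  wnorm2 d (I_weight lam f g h) (coords0 A).
Proof.
  intros HA. unfold Ifun. cbv zeta.
  change (fcalc d U lam ?phi) with (uconj d U (D phi)).
  rewrite centered_uconj, !uconj_mcomm, <- !uconj_mscale, !uconj_mmul, mtr_uconj by auto.
  unfold D. rewrite Re_tr_comm_comm_diagm by (apply coords0_hermitian; auto).
  rewrite rsum2_symmetrize.
  - rewrite <- rsum_scal. apply rsum_ext; intros. rewrite <- rsum_scal.
    apply rsum_ext; intros. unfold I_weight. field.
  - intros j k Hj Hk. rewrite (coords0_hermitian A HA j k), Cnorm2_conj by auto. ring.
Qed.

Lemma Jfun_eigen (f g h : R -> R) A : selfadjoint d A ->
  Jfun d rho (fcalc d U lam f) (fcalc d U lam g) (fcalc d U lam h) A =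
  wnorm2 d (J_weight lam f g h) (coords0 A).
Proof.
  intros HA. unfold Jfun. cbv zeta.
  change (fcalc d U lam ?phi) with (uconj d U (D phi)).
  rewrite centered_uconj, !uconj_manticomm, !uconj_mmul, mtr_uconj by auto.
  unfold D. rewrite Re_tr_acomm_acomm_diagm by (apply coords0_hermitian; auto).
  rewrite rsum2_symmetrize.
  - rewrite <- rsum_scal. apply rsum_ext; intros. rewrite <- rsum_scal.
    apply rsum_ext; intros. unfold J_weight. field.
  - intros j k Hj Hk. rewrite (coords0_hermitian A HA j k), Cnorm2_conj by auto. ring.
Qed.

Lemma tr_comm_eigen (f g h : R -> R) A B :
  mtr d (mmul d (mmul d (mmul d (fcalc d U lam f) (fcalc d U lam g)) (fcalc d U lam h))
                (mcomm d A B)) =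
  csum d (fun j => csum d (fun k =>
    Cmul (RtoC (f (lam j) * g (lam j) * h (lam j) - f (lam k) * g (lam k) * h (lam k)))
         (Cmul (coords0 A j k) (coords0 B k j)))).
Proof.
  change (fcalc d U lam ?phi) with (uconj d U (D phi)).
  rewrite <- (uconjK d U HU A), <- (uconjK d U HU B) at 1.
  rewrite uconj_mcomm, !uconj_mmul, mtr_uconj by auto.
  unfold D. rewrite mtr_diagm3_mcomm.
  apply csum_ext; intros j Hj. apply csum_ext; intros k Hk.
  destruct (Nat.eq_dec j k) as [<-|Hjk].
  - apply C_eq; simpl; ring.
  - rewrite !coords0_offdiag by auto. reflexivity.
Qed.

End Eigenbasis.

(** * Cauchy-Schwarz *)

Lemma Cnorm2_add_le b z w P Q p q :
  0 <= b -> 0 <= P -> 0 <= Q -> 0 <= p -> 0 <= q ->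
  b * Cnorm2 z <= P * Q -> b * Cnorm2 w <= p * q ->
  b * Cnorm2 (Cadd z w) <= (P + p) * (Q + q).
Proof.
  intros Hb HP HQ Hp Hq Hz Hw.
  assert (Hz0 := Cnorm2_nonneg z). assert (Hw0 := Cnorm2_nonneg w).
  destruct z as [z1 z2], w as [w1 w2]. unfold Cnorm2 in *; simpl in *.
  set (c := b * (z1 * w1 + z2 * w2)).
  assert (Hlag : (z1 * w1 + z2 * w2) ^ 2 <= (z1 * z1 + z2 * z2) * (w1 * w1 + w2 * w2)).
  { assert (0 <= (z1 * w2 - z2 * w1) ^ 2) by apply pow2_ge_0. nra. }
  assert (Hc2 : c ^ 2 <= (P * Q) * (p * q)).
  { apply Rle_trans with ((b * (z1 * z1 + z2 * z2)) * (b * (w1 * w1 + w2 * w2))).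
    - replace (c ^ 2) with (b * b * (z1 * w1 + z2 * w2) ^ 2) by (unfold c; ring).
      replace ((b * (z1 * z1 + z2 * z2)) * (b * (w1 * w1 + w2 * w2)))
        with (b * b * ((z1 * z1 + z2 * z2) * (w1 * w1 + w2 * w2))) by ring.
      apply Rmult_le_compat_l; [nra | exact Hlag].
    - apply Rmult_le_compat; nra. }
  assert (Hc : 2 * c <= P * q + p * Q).
  { assert (0 <= P * q) by nra. assert (0 <= p * Q) by nra.
    destruct (Rle_dec (2 * c) (P * q + p * Q)) as [|Hlt]; [assumption|].
    assert (0 <= (P * q - p * Q) ^ 2) by apply pow2_ge_0. nra. }
  replace (b * ((z1 + w1) * (z1 + w1) + (z2 + w2) * (z2 + w2)))
    with (b * (z1 * z1 + z2 * z2) + 2 * c + b * (w1 * w1 + w2 * w2)) by (unfold c; ring).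
  nra.
Qed.

Lemma csum_cauchy_schwarz n (t : nat -> C) (P Q : nat -> R) b : 0 <= b ->
  (forall k, (k < n)%nat -> 0 <= P k /\ 0 <= Q k /\ b * Cnorm2 (t k) <= P k * Q k) ->
  0 <= rsum n P /\ 0 <= rsum n Q /\ b * Cnorm2 (csum n t) <= rsum n P * rsum n Q.
Proof.
  intros Hb. induction n as [|n IH]; intros H.
  - simpl. unfold Cnorm2, C0, RtoC; simpl. lra.
  - destruct IH as [HP [HQ HT]]; [intros; apply H; lia|].
    destruct (H n ltac:(lia)) as [Hp [Hq Ht]]. simpl.
    repeat split; try lra. apply Cnorm2_add_le; auto.
Qed.

Lemma csum2_cauchy_schwarz n (t : nat -> nat -> C) (P Q : nat -> nat -> R) b : 0 <= b ->
  (forall j k, (j < n)%nat -> (k < n)%nat ->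
     0 <= P j k /\ 0 <= Q j k /\ b * Cnorm2 (t j k) <= P j k * Q j k) ->
  b * Cnorm2 (csum n (fun j => csum n (fun k => t j k))) <=
  rsum n (fun j => rsum n (fun k => P j k)) * rsum n (fun j => rsum n (fun k => Q j k)).
Proof. intros Hb H. apply csum_cauchy_schwarz; auto. intros j Hj. apply csum_cauchy_schwarz; auto. Qed.

(* Cauchy-Schwarz applied twice, pairing [al] on [a] with [ga] on [b] and
   vice versa; the geometric mean of the two bounds is the product of the
   square roots. *)
Lemma weighted_uncertainty d (al ga c : nat -> nat -> R) (a b : Mat) beta0 :
  (forall j k, (j < d)%nat -> (k < d)%nat ->
     0 <= al j k /\ 0 <= ga j k /\ beta0 * c j k ^ 2 <= al j k * ga j k) ->
  hermitian_on d b ->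
  beta0 * Cnorm2 (csum d (fun j => csum d (fun k =>
                    Cmul (RtoC (c j k)) (Cmul (a j k) (b k j))))) <=
  sqrt (wnorm2 d al a * wnorm2 d ga a) * sqrt (wnorm2 d al b * wnorm2 d ga b).
Proof.
  intros Hw Hb. set (T := csum d _).
  assert (Hsqrt : 0 <= sqrt (wnorm2 d al a * wnorm2 d ga a) * sqrt (wnorm2 d al b * wnorm2 d ga b))
    by (apply Rmult_le_pos; apply sqrt_pos).
  assert (HT := Cnorm2_nonneg T).
  destruct (Rle_dec beta0 0) as [Hneg|Hpos].
  { assert (beta0 * Cnorm2 T <= 0) by nra. lra. }
  assert (Hterm : forall (w1 w2 : nat -> nat -> R), (forall j k, (j < d)%nat -> (k < d)%nat ->
      0 <= w1 j k /\ 0 <= w2 j k /\ beta0 * c j k ^ 2 <= w1 j k * w2 j k) ->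
      beta0 * Cnorm2 T <= wnorm2 d w1 a * wnorm2 d w2 b).
  { intros w1 w2 Hw12. apply csum2_cauchy_schwarz; [lra|]. intros j k Hj Hk.
    destruct (Hw12 j k Hj Hk) as [H1 [H2 H3]].
    assert (Ha := Cnorm2_nonneg (a j k)). assert (Hbn := Cnorm2_nonneg (b j k)).
    rewrite !Cnorm2_mul, Cnorm2_RtoC, (Hb j k Hj Hk), Cnorm2_conj.
    repeat split; try (apply Rmult_le_pos; assumption).
    replace (beta0 * (c j k ^ 2 * (Cnorm2 (a j k) * Cnorm2 (b j k))))
      with ((beta0 * c j k ^ 2) * (Cnorm2 (a j k) * Cnorm2 (b j k))) by ring.
    replace (w1 j k * Cnorm2 (a j k) * (w2 j k * Cnorm2 (b j k)))
      with ((w1 j k * w2 j k) * (Cnorm2 (a j k) * Cnorm2 (b j k))) by ring.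
    apply Rmult_le_compat_r; [apply Rmult_le_pos|]; assumption. }
  assert (H1 := Hterm al ga Hw).
  assert (H2 := Hterm ga al ltac:(intros j k Hj Hk; destruct (Hw j k Hj Hk); lra)).
  assert (HT0 : 0 <= beta0 * Cnorm2 T) by nra.
  assert (Hal : 0 <= wnorm2 d al a)
    by (apply wnorm2_nonneg; intros j k Hj Hk; apply Hw; auto).
  assert (Hga : 0 <= wnorm2 d ga a)
    by (apply wnorm2_nonneg; intros j k Hj Hk; apply Hw; auto).
  rewrite <- sqrt_mult_alt, <- (sqrt_pow2 (beta0 * Cnorm2 T)) by nra.
  apply sqrt_le_1_alt.
  replace (wnorm2 d al a * wnorm2 d ga a * (wnorm2 d al b * wnorm2 d ga b))
    with ((wnorm2 d al a * wnorm2 d ga b) * (wnorm2 d ga a * wnorm2 d al b)) by ring.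
  simpl. rewrite Rmult_1_r. apply Rmult_le_compat; lra.
Qed.

(** * The constant [beta] *)

Definition beta_term (a b : R) : R := a / (1 + a + b) ^ 2.

Lemma beta_term_nonneg a b : 0 <= a -> 0 <= beta_term a b.
Proof.
  intros Ha. unfold beta_term, Rdiv.
  destruct (Req_dec ((1 + a + b) ^ 2) 0) as [E|E].
  - rewrite E, Rinv_0. lra.
  - apply Rmult_le_pos; auto. left. apply Rinv_0_lt_compat.
    assert (0 <= (1 + a + b) ^ 2) by apply pow2_ge_0. lra.
Qed.

Lemma beta_term_ge_nu_end mu nu n N :
  n <= nu <= N -> 0 <= mu -> 1 + mu + nu <> 0 ->
  (1 + mu + n <> 0 /\ beta_term mu n <= beta_term mu nu) \/
  (1 + mu + N <> 0 /\ beta_term mu N <= beta_term mu nu).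
Proof.
  intros Hnu Hmu Hs.
  assert (Hle : forall b, 1 + mu + b <> 0 -> (1 + mu + nu) ^ 2 <= (1 + mu + b) ^ 2 ->
                          beta_term mu b <= beta_term mu nu).
  { intros b Hb Hsq. unfold beta_term, Rdiv. apply Rmult_le_compat_l; auto.
    apply Rinv_le_contravar; auto. apply pow2_gt_0; auto. }
  destruct (Rlt_dec 0 (1 + mu + nu)).
  - right. split; [lra|]. apply Hle; [lra|]. apply pow_incr. lra.
  - left. split; [lra|]. apply Hle; [lra|].
    replace ((1 + mu + nu) ^ 2) with ((- (1 + mu + nu)) ^ 2) by ring.
    replace ((1 + mu + n) ^ 2) with ((- (1 + mu + n)) ^ 2) by ring.
    apply pow_incr. lra.
Qed.

(* A vanishing denominator at an end point makes that [beta_term] equal to 0,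
   since division by zero yields 0 in Rocq. *)
Lemma beta_term_ge_mu_end m mu M b :
  0 <= m -> m <= mu <= M -> 1 + mu + b <> 0 ->
  beta_term m b <= beta_term mu b \/ beta_term M b <= beta_term mu b.
Proof.
  intros Hm Hr Hs. set (c := 1 + b).
  assert (Hzero : forall a, 1 + a + b = 0 -> beta_term a b = 0).
  { intros a Ha. unfold beta_term, Rdiv. rewrite Ha, pow_i, Rinv_0 by lia. ring. }
  destruct (Req_dec (1 + m + b) 0) as [E|E].
  { left. rewrite Hzero by exact E. apply beta_term_nonneg. lra. }
  destruct (Req_dec (1 + M + b) 0) as [E2|E2].
  { right. rewrite Hzero by exact E2. apply beta_term_nonneg. lra. }
  assert (Hdiv : forall x y D1 D, 0 < D1 -> 0 < D -> x * D <= y * D1 -> x / D1 <= y / D).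
  { intros x y D1 D H1 H2 H. apply Rmult_le_reg_r with (D1 * D); [nra|].
    replace (x / D1 * (D1 * D)) with (x * D) by (field; lra).
    replace (y / D * (D1 * D)) with (y * D1) by (field; lra). exact H. }
  assert (D1 := pow2_gt_0 _ E). assert (D := pow2_gt_0 _ Hs). assert (D2 := pow2_gt_0 _ E2).
  unfold beta_term. destruct (Rle_dec (m * mu) (c * c)).
  - left. apply Hdiv; auto.
    assert (mu * (1 + m + b) ^ 2 - m * (1 + mu + b) ^ 2 = (mu - m) * (c * c - m * mu))
      by (unfold c; ring).
    assert (0 <= (mu - m) * (c * c - m * mu)) by (apply Rmult_le_pos; lra). lra.
  - right. apply Hdiv; auto.
    assert (mu * (1 + M + b) ^ 2 - M * (1 + mu + b) ^ 2 = (M - mu) * (M * mu - c * c))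
      by (unfold c; ring).
    assert (m * mu <= M * mu) by (apply Rmult_le_compat_r; lra).
    assert (0 <= (M - mu) * (M * mu - c * c)) by (apply Rmult_le_pos; lra). lra.
Qed.

(* [beta_term mu nu] is monotone in [|1 + mu + nu|] and quasi-concave in [mu],
   so over the rectangle [m,M] x [n,N] it is minimal at a corner. *)
Lemma beta_le_beta_term m M n N mu nu :
  0 <= m -> m <= mu <= M -> n <= nu <= N -> 1 + mu + nu <> 0 ->
  beta m M n N <= beta_term mu nu.
Proof.
  intros Hm Hmu Hnu Hs.
  assert (B1 : beta m M n N <= beta_term m n) by (unfold beta; eapply Rle_trans; apply Rmin_l).
  assert (B2 : beta m M n N <= beta_term m N)
    by (unfold beta; eapply Rle_trans; [apply Rmin_l | apply Rmin_r]).
  assert (B3 : beta m M n N <= beta_term M n)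
    by (unfold beta; eapply Rle_trans; [apply Rmin_r | apply Rmin_l]).
  assert (B4 : beta m M n N <= beta_term M N) by (unfold beta; eapply Rle_trans; apply Rmin_r).
  destruct (beta_term_ge_nu_end mu nu n N Hnu ltac:(lra) Hs) as [[H1 H2]|[H1 H2]].
  - destruct (beta_term_ge_mu_end m mu M n Hm Hmu H1); lra.
  - destruct (beta_term_ge_mu_end m mu M N Hm Hmu H1); lra.
Qed.

(** * Cauchy's mean value theorem for [log f] and [log g] *)

Definition clamp01 (z : R) : R := Rmax 0 (Rmin z 1).

Lemma clamp01_id z : 0 <= z <= 1 -> clamp01 z = z.
Proof. intros. unfold clamp01. rewrite Rmin_left, Rmax_right; lra. Qed.

Lemma clamp01_range z : 0 <= clamp01 z <= 1.
Proof. unfold clamp01, Rmax, Rmin. repeat destruct Rle_dec; lra. Qed.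

Lemma clamp01_dist z c : 0 <= c <= 1 -> Rabs (clamp01 z - c) <= Rabs (z - c).
Proof.
  intros. unfold clamp01, Rmax, Rmin.
  repeat destruct Rle_dec; unfold Rabs; repeat destruct Rcase_abs; lra.
Qed.

(* An admissible [f] is only continuous on [0,1]; [f o clamp01] is continuous
   everywhere, as Stdlib's [MVT] requires. *)
Lemma continuity_pt_clamp01 f : admissible f ->
  forall c, 0 <= c <= 1 -> continuity_pt (fun z => f (clamp01 z)) c.
Proof.
  intros [_ [Hc _]] c Hc0 eps Heps. destruct (Hc c Hc0 eps Heps) as [alp [Halp H]].
  exists alp. split; auto. intros z [_ Hz]. simpl in *. unfold R_dist in *.
  rewrite (clamp01_id c) by lra. apply H. split; [apply clamp01_range|].
  eapply Rle_lt_trans; [apply clamp01_dist; lra | exact Hz].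
Qed.

Lemma continuity_pt_ln_clamp01 f : admissible f -> (forall x, 0 < x <= 1 -> 0 < f x) ->
  forall c, 0 < c <= 1 -> continuity_pt (fun z => ln (f (clamp01 z))) c.
Proof.
  intros Hf Hp c Hc.
  apply (continuity_pt_comp (fun z => f (clamp01 z)) ln).
  - apply continuity_pt_clamp01; auto; lra.
  - apply derivable_continuous_pt. exists (/ f (clamp01 c)). apply derivable_pt_lim_ln.
    rewrite clamp01_id by lra. apply Hp; auto.
Qed.

Lemma derivable_pt_lim_local (g1 g2 : R -> R) c l del0 : 0 < del0 ->
  (forall z, Rabs (z - c) < del0 -> g1 z = g2 z) ->
  derivable_pt_lim g2 c l -> derivable_pt_lim g1 c l.
Proof.
  intros Hd Heq H eps He. destruct (H eps He) as [del Hdel].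
  assert (Hp : 0 < Rmin del del0) by (apply Rmin_pos; [apply cond_pos|auto]).
  exists (mkposreal _ Hp). simpl. intros h Hh Hlt.
  assert (Rmin del del0 <= del) by apply Rmin_l. assert (Rmin del del0 <= del0) by apply Rmin_r.
  rewrite (Heq (c + h)), (Heq c).
  - apply Hdel; auto. lra.
  - replace (c - c) with 0 by ring. rewrite Rabs_R0; auto.
  - replace (c + h - c) with h by ring. lra.
Qed.

Lemma derivable_logf f : admissible f -> (forall x, 0 < x <= 1 -> 0 < f x) ->
  forall c, 0 < c < 1 -> exists a, derivable_pt_lim (logf f) c a /\
     derivable_pt_lim (fun z => ln (f (clamp01 z))) c a.
Proof.
  intros [_ [_ Hd]] Hp c Hc. destruct (Hd c Hc) as [l Hl].
  assert (H1 : derivable_pt_lim (logf f) c (/ f c * l)).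
  { apply (derivable_pt_lim_comp f ln); auto. apply derivable_pt_lim_ln, Hp. lra. }
  exists (/ f c * l). split; auto.
  apply (derivable_pt_lim_local _ (logf f) c _ (Rmin c (1 - c))); [apply Rmin_pos; lra| |auto].
  intros z Hz. unfold logf. rewrite clamp01_id; auto.
  assert (Rmin c (1 - c) <= c) by apply Rmin_l. assert (Rmin c (1 - c) <= 1 - c) by apply Rmin_r.
  unfold Rabs in Hz; destruct Rcase_abs; lra.
Qed.

Lemma logf_cauchy_mvt f g : admissible f -> admissible g ->
  (forall x, 0 < x <= 1 -> 0 < f x) -> (forall x, 0 < x <= 1 -> 0 < g x) ->
  forall x y, 0 < x -> x < y -> y <= 1 ->
  exists c a b, x < c < y /\ derivable_pt_lim (logf f) c a /\ derivable_pt_lim (logf g) c b /\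
    (logf g y - logf g x) * a = (logf f y - logf f x) * b.
Proof.
  intros Hf Hg Hpf Hpg x y Hx Hxy Hy.
  set (Ft z := ln (f (clamp01 z))). set (Gt z := ln (g (clamp01 z))).
  assert (Hder : forall k, admissible k -> (forall x, 0 < x <= 1 -> 0 < k x) ->
                 forall c, x < c < y -> derivable_pt (fun z => ln (k (clamp01 z))) c).
  { intros k Hk Hpk c Hc. exists (Derive (fun z => ln (k (clamp01 z))) c).
    destruct (derivable_logf k Hk Hpk c ltac:(lra)) as [a [_ Ha]].
    replace (Derive _ c) with a; [exact Ha|].
    symmetry. apply is_derive_unique, is_derive_Reals, Ha. }
  destruct (MVT Ft Gt x y (Hder f Hf Hpf) (Hder g Hg Hpg) Hxy) as [c [Hc Heq]].
  - intros c Hc. apply continuity_pt_ln_clamp01; auto; lra.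
  - intros c Hc. apply continuity_pt_ln_clamp01; auto; lra.
  - destruct (derivable_logf f Hf Hpf c ltac:(lra)) as [a [Ha Ha']].
    destruct (derivable_logf g Hg Hpg c ltac:(lra)) as [b [Hb Hb']].
    exists c, a, b. repeat split; auto; try lra.
    rewrite (derive_pt_eq_0 _ _ _ _ Ha'), (derive_pt_eq_0 _ _ _ _ Hb') in Heq.
    unfold Ft, Gt in Heq. rewrite !clamp01_id in Heq by lra. unfold logf. lra.
Qed.

Definition log_ratio (f g : R -> R) (x y : R) : R :=
  (logf g y - logf g x) / (logf f y - logf f x).

Lemma exp_logf_diff k x y : 0 < k x -> 0 < k y -> k y = k x * exp (logf k y - logf k x).
Proof.
  intros Hx Hy. unfold Rminus. rewrite exp_plus, exp_Ropp. unfold logf.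
  rewrite !exp_ln by assumption. field. lra.
Qed.

(** * The two-point inequality *)

Section TwoPoint.
Variables f g h : R -> R.
Hypotheses (Hf : admissible f) (Hg : admissible g) (Hh : admissible h).
Hypothesis Hpos : forall x, 0 < x <= 1 -> 0 < f x /\ 0 < g x /\ 0 < h x.
Hypothesis HF'nz : forall x a, 0 < x < 1 -> derivable_pt_lim (logf f) x a -> a <> 0.
Hypothesis HFinj : forall x y, 0 < x <= 1 -> 0 < y <= 1 -> x <> y -> logf f x <> logf f y.
Variables m M n N : R.
Hypotheses (Hm : is_inf (deriv_ratios (logf f) (logf g)) m)
           (HM : is_sup (deriv_ratios (logf f) (logf g)) M)
           (Hn : is_inf (deriv_ratios (logf f) (logf h)) n)
           (HN : is_sup (deriv_ratios (logf f) (logf h)) N).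

Let Hpf x (Hx : 0 < x <= 1) : 0 < f x := proj1 (Hpos x Hx).
Let Hpg x (Hx : 0 < x <= 1) : 0 < g x := proj1 (proj2 (Hpos x Hx)).
Let Hph x (Hx : 0 < x <= 1) : 0 < h x := proj2 (proj2 (Hpos x Hx)).

Lemma logf_diff_neq0 x y : 0 < x -> x < y -> y <= 1 -> logf f y - logf f x <> 0.
Proof. intros Hx Hxy Hy E. apply (HFinj y x); lra. Qed.

Lemma log_ratio_bounds k lo hi : admissible k -> (forall x, 0 < x <= 1 -> 0 < k x) ->
  is_inf (deriv_ratios (logf f) (logf k)) lo -> is_sup (deriv_ratios (logf f) (logf k)) hi ->
  forall x y, 0 < x -> x < y -> y <= 1 -> lo <= log_ratio f k x y <= hi.
Proof.
  intros Hk Hpk Hlo Hhi x y Hx Hxy Hy.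
  destruct (logf_cauchy_mvt f k Hf Hk Hpf Hpk x y Hx Hxy Hy)
    as [c [a [b [Hc [Ha [Hb Heq]]]]]].
  assert (Ha0 : a <> 0) by (apply (HF'nz c a); auto; lra).
  assert (Ht := logf_diff_neq0 x y Hx Hxy Hy).
  replace (log_ratio f k x y) with (b / a) by (unfold log_ratio; field_simplify_eq; lra).
  assert (Hin : deriv_ratios (logf f) (logf k) (b / a)) by (exists c, a, b; repeat split; auto; lra).
  split; [apply Hlo | apply Hhi]; exact Hin.
Qed.

Lemma CLI_cases_reduce :
  (CLI_monotone f g /\ CLI_monotone f h /\
   forall x y, 0 < x -> x < y -> y <= 1 -> 1 + log_ratio f g x y <= log_ratio f h x y) \/
  (CLI_monotone f g /\ CLI_antimonotone f h /\
   forall x y, 0 < x -> x < y -> y <= 1 -> 0 <= 1 + log_ratio f g x y + log_ratio f h x y) ->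
  0 <= m /\
  (forall x y, 0 <= x <= 1 -> 0 <= y <= 1 -> 0 <= (f x - f y) * (g x - g y)) /\
  (forall x y, 0 < x -> x < y -> y <= 1 -> exponent_cond (log_ratio f g x y) (log_ratio f h x y)).
Proof.
  intros Hcase.
  assert (Hfg : CLI_monotone f g) by (destruct Hcase as [[H _]|[H _]]; exact H).
  destruct Hfg as [Hmono [m' [M' [Hm' [_ Hm'0]]]]].
  assert (Hm'm : m' <= m) by (apply Hm, Hm').
  repeat split; [lra | exact Hmono|].
  intros x y Hx Hxy Hy.
  destruct Hcase as [[_ [_ H]] | [_ [[_ [n2 [N2 [_ [HN2 HN20]]]]] H]]].
  - left. auto.
  - right. split; [|auto].
    assert (N <= N2) by (apply HN, HN2).
    assert (Hnu := log_ratio_bounds h n N Hh Hph Hn HN x y Hx Hxy Hy). lra.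
Qed.

Hypothesis Hm0 : 0 <= m.
Hypothesis Hmono : forall x y, 0 <= x <= 1 -> 0 <= y <= 1 -> 0 <= (f x - f y) * (g x - g y).
Hypothesis Hcond :
  forall x y, 0 < x -> x < y -> y <= 1 -> exponent_cond (log_ratio f g x y) (log_ratio f h x y).

(* Writing [f y = f x e^t], [g y = g x e^(mu t)], [h y = h x e^(nu t)] reduces
   the inequality to [exp_pair_ineq]. *)
Lemma two_point_ineq_lt x y : 0 < x -> x < y -> y <= 1 ->
  16 * beta m M n N * (f x * g x * h x - f y * g y * h y) ^ 2 <=
  (f x ^ 2 - f y ^ 2) * (g x ^ 2 - g y ^ 2) * (h x + h y) ^ 2.
Proof.
  intros Hx Hxy Hy.
  set (t := logf f y - logf f x).
  assert (Ht : t <> 0) by (apply logf_diff_neq0; auto).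
  set (mu := log_ratio f g x y). set (nu := log_ratio f h x y).
  assert (Hmu : m <= mu <= M) by (apply (log_ratio_bounds g); auto).
  assert (Hnu : n <= nu <= N) by (apply (log_ratio_bounds h); auto).
  assert (Ef : f y = f x * exp t) by (apply exp_logf_diff; apply Hpf; lra).
  assert (Eg : g y = g x * exp (mu * t)).
  { replace (mu * t) with (logf g y - logf g x) by (unfold mu, t, log_ratio; field; auto).
    apply exp_logf_diff; apply Hpg; lra. }
  assert (Eh : h y = h x * exp (nu * t)).
  { replace (nu * t) with (logf h y - logf h x) by (unfold nu, t, log_ratio; field; auto).
    apply exp_logf_diff; apply Hph; lra. }
  assert (Hexp := exp_pair_ineq t mu nu (beta m M n N) ltac:(lra) (Hcond x y Hx Hxy Hy)
                    (beta_le_beta_term m M n N mu nu Hm0 Hmu Hnu)).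
  assert (HK : 0 <= (f x * g x * h x) ^ 2) by apply pow2_ge_0.
  rewrite Ef, Eg, Eh.
  replace (16 * beta m M n N * (f x * g x * h x - f x * exp t * (g x * exp (mu * t)) *
             (h x * exp (nu * t))) ^ 2)
    with ((f x * g x * h x) ^ 2 *
          (16 * beta m M n N * (exp t * exp (mu * t) * exp (nu * t) - 1) ^ 2)) by ring.
  replace ((f x ^ 2 - (f x * exp t) ^ 2) * (g x ^ 2 - (g x * exp (mu * t)) ^ 2) *
           (h x + h x * exp (nu * t)) ^ 2)
    with ((f x * g x * h x) ^ 2 *
          ((exp t ^ 2 - 1) * (exp (mu * t) ^ 2 - 1) * (exp (nu * t) + 1) ^ 2)) by ring.
  apply Rmult_le_compat_l; assumption.
Qed.

Lemma two_point_ineq x y : 0 < x <= 1 -> 0 < y <= 1 ->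
  16 * beta m M n N * (f x * g x * h x - f y * g y * h y) ^ 2 <=
  (f x ^ 2 - f y ^ 2) * (g x ^ 2 - g y ^ 2) * (h x + h y) ^ 2.
Proof.
  intros Hx Hy. destruct (Rtotal_order x y) as [Hxy|[<-|Hxy]].
  - apply two_point_ineq_lt; lra.
  - replace (f x ^ 2 - f x ^ 2) with 0 by ring.
    replace (f x * g x * h x - f x * g x * h x) with 0 by ring. lra.
  - eapply Rle_trans; [|eapply Rle_trans; [apply (two_point_ineq_lt y x); lra|]];
      right; ring.
Qed.

Lemma eigen_weights_bound x y : 0 < x <= 1 -> 0 < y <= 1 ->
  0 <= (f x - f y) * (g x - g y) * (h x + h y) / 4 /\
  0 <= (f x + f y) * (g x + g y) * (h x + h y) / 4 /\
  beta m M n N * (f x * g x * h x - f y * g y * h y) ^ 2 <=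
  (f x - f y) * (g x - g y) * (h x + h y) / 4 * ((f x + f y) * (g x + g y) * (h x + h y) / 4).
Proof.
  intros Hx Hy.
  destruct (Hpos x Hx) as [Hfx [Hgx Hhx]], (Hpos y Hy) as [Hfy [Hgy Hhy]].
  assert (Hfg : 0 <= (f x - f y) * (g x - g y)) by (apply Hmono; lra).
  split; [|split].
  - unfold Rdiv. apply Rmult_le_pos; [apply Rmult_le_pos|]; lra.
  - unfold Rdiv. apply Rmult_le_pos; [repeat apply Rmult_le_pos|]; lra.
  - assert (H := two_point_ineq x y Hx Hy).
    replace ((f x ^ 2 - f y ^ 2) * (g x ^ 2 - g y ^ 2) * (h x + h y) ^ 2)
      with (16 * ((f x - f y) * (g x - g y) * (h x + h y) / 4 *
                  ((f x + f y) * (g x + g y) * (h x + h y) / 4))) in H by field.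
    lra.
Qed.

End TwoPoint.

Theorem theorem3p1
  (f g h : R -> R)
  (Hf : admissible f) (Hg : admissible g) (Hh : admissible h)
  (Hpos : forall x, 0 < x <= 1 -> 0 < f x /\ 0 < g x /\ 0 < h x)
  (HF'nz : forall x a, 0 < x < 1 -> derivable_pt_lim (logf f) x a -> a <> 0)
  (HFinj : forall x y, 0 < x <= 1 -> 0 < y <= 1 -> x <> y -> logf f x <> logf f y)
  (m M n N : R)
  (Hm : is_inf (deriv_ratios (logf f) (logf g)) m)
  (HM : is_sup (deriv_ratios (logf f) (logf g)) M)
  (Hn : is_inf (deriv_ratios (logf f) (logf h)) n)
  (HN : is_sup (deriv_ratios (logf f) (logf h)) N)
  (Hcase :
     (CLI_monotone f g /\ CLI_monotone f h /\
      forall x y, 0 < x -> x < y -> y <= 1 ->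
        1 + (logf g y - logf g x) / (logf f y - logf f x)
          <= (logf h y - logf h x) / (logf f y - logf f x))
     \/
     (CLI_monotone f g /\ CLI_antimonotone f h /\
      forall x y, 0 < x -> x < y -> y <= 1 ->
        0 <= 1 + (logf g y - logf g x) / (logf f y - logf f x)
               + (logf h y - logf h x) / (logf f y - logf f x)))
  (d : nat) (U : Mat) (lam : nat -> R)
  (Hrho : density_spectral d U lam)
  (A B : Mat) (HA : selfadjoint d A) (HB : selfadjoint d B) :
  let rho := fcalc d U lam (fun x => x) in
  let fr := fcalc d U lam f in
  let gr := fcalc d U lam g in
  let hr := fcalc d U lam h in
  Ufun d rho fr gr hr A * Ufun d rho fr gr hr B >=
    beta m M n N * Cnorm2 (mtr d (mmul d (mmul d (mmul d fr gr) hr) (mcomm d A B))).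
Proof.
  intros rho fr gr hr.
  destruct Hrho as [HU [Hlam Hsum]].
  assert (Hlam1 : forall k, (k < d)%nat -> 0 < lam k <= 1).
  { intros k Hk. split; [auto|]. rewrite <- Hsum.
    apply rsum_ge_term; auto. intros; left; auto. }
  destruct (CLI_cases_reduce f g h Hf Hh Hpos HF'nz HFinj m n N Hm Hn HN Hcase)
    as [Hm0 [Hmono Hcond]].
  unfold Ufun, fr, gr, hr, rho.
  rewrite tr_comm_eigen, !Ifun_eigen, !Jfun_eigen by auto.
  apply Rle_ge, weighted_uncertainty; [|apply coords0_hermitian; auto].
  intros j k Hj Hk.
  apply (eigen_weights_bound f g h Hf Hg Hh Hpos HF'nz HFinj m M n N Hm HM Hn HN Hm0 Hmono Hcond);
    auto.
Qed.
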